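(* Let $K\ge 2$, $T\ge1$, and let $\mathbf{x}(t)\in[0,1]^K$, $t=1,\dots,T$, be any fixed sequence of reward vectors. Let $\tau=e\,\mathbb{G}_{max}-(4-e)\,\mathbb{G}_{min}$ and run the algorithm REX3 described in the context with transfer function $\psi$ equal to the identity and parameter $\gamma=\min\left\{\tfrac12,\sqrt{\frac{K\ln(K)}{\tau}}\right\}$ (with $\gamma=\tfrac12$ if $\tau=0$). Then the expected regret $\mathbb{G}_{max}-\mathbb{E}\mathbb{G}_{alg}$ is $\mathcal{O}\big(\sqrt{K\ln(K)\,T}\big)$.
   Context: Adversarial utility-based dueling bandit setting: there are $K$ arms; before play, an (oblivious) environment fixes a horizon $T$ and reward vectors $\mathbf{x}(t)=(x_1(t),\dots,x_K(t))\in[0,1]^K$ for $t=1,\dots,T$. At each round the learner selects a pair of arms $(a_t,b_t)$ and observes only the relative feedback $\psi(x_{a_t}(t)-x_{b_t}(t))$, here with $\psi(z)=z$. Algorithm REX3 with parameter $\gamma$: initialize $w_i(1)=1$ for all $i$. At each round $t$: set $p_i(t)=(1-\gamma)\frac{w_i(t)}{\sum_{j=1}^K w_j(t)}+\frac{\gamma}{K}$; draw two arms $a_t,b_t$ independently according to $\mathbf{p}(t)=(p_1(t),\dots,p_K(t))$; receive $\psi(x_{a_t}(t)-x_{b_t}(t))$; if $a_t\neq b_t$, set $w_{a_t}(t+1)=w_{a_t}(t)\exp\!\big(\frac{\gamma}{K}\frac{\psi(x_{a_t}-x_{b_t})}{2p_{a_t}(t)}\big)$ and $w_{b_t}(t+1)=w_{b_t}(t)\exp\!\big(-\frac{\gamma}{K}\frac{\psi(x_{a_t}-x_{b_t})}{2p_{b_t}(t)}\big)$;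 other weights unchanged. Notation: $\mathbb{G}_{max}=\max_i\sum_{t=1}^T x_i(t)$; $\mathbb{G}_{min}=\min_i\sum_{t=1}^T x_i(t)$; $\mathbb{G}_{alg}=\frac12\sum_{t=1}^T\big(x_{a_t}(t)+x_{b_t}(t)\big)$. Expectations are over the algorithm's internal randomization. The $\mathcal{O}$ hides an absolute constant independent of $K$, $T$ and the rewards (for $T$ large enough relative to $K\ln K$). *)

From HB Require Import structures.
From mathcomp Require Import all_boot all_order all_algebra.
From mathcomp Require Import all_classical all_reals all_analysis.
Set Implicit Arguments. Unset Strict Implicit. Unset Printing Implicit Defensive.
Import Order.TTheory GRing.Theory Num.Theory.
Local Open Scope ring_scope.

Section REX3.
Variable R : realType.
Variable K : nat.

(* Reward vectors: round t (t = 0, ..., T-1 stands for rounds 1..T) gives x t : 'I_K -> R. *)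
Variable x : nat -> 'I_K -> R.
Variable gamma : R.

Definition psi (z : R) : R := z.

Definition rex3_p (w : 'I_K -> R) (i : 'I_K) : R :=
  (1 - gamma) * (w i / \sum_(j < K) w j) + gamma / K%:R.

Definition rex3_update (t : nat) (w : 'I_K -> R) (a b : 'I_K) : 'I_K -> R :=
  fun i =>
    let d := psi (x t a - x t b) in
    if a == b then w i
    else if i == a then w i * expR (gamma / K%:R * (d / (2 * rex3_p w a)))
    else if i == b then w i * expR (- (gamma / K%:R * (d / (2 * rex3_p w b))))
    else w i.

(* Expected value (over the internal randomization of REX3: a_t, b_t drawn
   independently from p(t)) of the gain (1/2) sum (x_{a_t}(t) + x_{b_t}(t))
   accumulated over the n rounds t, t+1, ..., t+n-1, starting with weights w. *)
Fixpoint rex3_egain (n t : nat) (w : 'I_K -> R) : R :=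
  match n with
  | 0 => 0
  | n'.+1 =>
      \sum_(a < K) \sum_(b < K)
        rex3_p w a * rex3_p w b *
        ((x t a + x t b) / 2 + rex3_egain n' t.+1 (rex3_update t w a b))
  end.

Definition rex3_expected_gain (T : nat) : R := rex3_egain T 0 (fun _ => 1).

End REX3.

Definition cumgain (R : realType) (K : nat) (x : nat -> 'I_K -> R) (T : nat)
  (i : 'I_K) : R := \sum_(t < T) x t i.

Definition Gmax (R : realType) (K : nat) (x : nat -> 'I_K -> R) (T : nat) : R :=
  match [pick i : 'I_K] with
  | Some i0 => \big[Num.max/cumgain x T i0]_(i < K) cumgain x T i
  | None => 0
  end.

Definition Gmin (R : realType) (K : nat) (x : nat -> 'I_K -> R) (T : nat) : R :=
  match [pick i : 'I_K] with
  | Some i0 => \big[Num.min/cumgain x T i0]_(i < K) cumgain x T i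
  | None => 0
  end.

Definition rex3_tau (R : realType) (K : nat) (x : nat -> 'I_K -> R) (T : nat) : R :=
  expR 1 * Gmax x T - (4 - expR 1) * Gmin x T.

Definition rex3_gamma (R : realType) (K : nat) (x : nat -> 'I_K -> R) (T : nat) : R :=
  let tau := rex3_tau x T in
  if tau == 0 then 2^-1
  else Num.min 2^-1 (Num.sqrt (K%:R * ln K%:R / tau)).

From HB Require Import structures.
From mathcomp Require Import all_boot all_order all_algebra.
From mathcomp Require Import all_classical all_reals all_analysis.
From mathcomp Require Import ring lra zify.
Import Order.TTheory GRing.Theory Num.Theory.
Local Open Scope ring_scope.

(* Fix an arm j and consider the potential ln (\sum_i w i) - ln (w j), which is
   nonnegative and equals ln K for the initial weights.  REX3 multiplies w i by
   expR (eta * c i) with eta = gamma / K, where the importance-weighted estimate c i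
   has expectation x i - g over the drawn pair, g being the expected reward of the
   round.  Every probability is at least eta, so eta * c i <= 1/2; then
   expR y <= 1 + y + 2 y^2 and ln y <= y - 1 bound the expected growth of
   ln (\sum_i w i) by eta^2 / (1 - gamma) * (3 K g + \sum_i x i).  Telescoping the
   potential over the T rounds gives
   G_j - E G_alg <= K ln K / gamma + 8 gamma Gmax,
   and since tau = e Gmax - (4 - e) Gmin lies between Gmax / 2 and 4 T, the tuned
   gamma makes both terms O(sqrt (K ln K T)). *)

Section PairSums.
Variables (R : comPzRingType) (n : nat) (u v : 'I_n -> R).

Lemma sum_pairs_prod (f g : 'I_n -> R) :
  \sum_a \sum_b f a * g b = (\sum_a f a) * (\sum_b g b).
Proof. by rewrite big_distrlr. Qed.

Lemma sum_pairs_snd (f : 'I_n -> R) : \sum_(a < n) \sum_b f b = n%:R * \sum_b f b.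
Proof. by rewrite sumr_const card_ord mulr_natl. Qed.

Lemma sum_pairs_fst (f : 'I_n -> R) : \sum_a \sum_(b < n) f a = n%:R * \sum_a f a.
Proof. by rewrite exchange_big sum_pairs_snd. Qed.

Lemma sum_pairs_sub_mul :
  \sum_a \sum_b (u a - u b) * (v a - v b) =
  2 * (n%:R * \sum_a u a * v a - (\sum_a u a) * (\sum_a v a)).
Proof.
transitivity (\sum_a \sum_(b < n) (u a * v a) + \sum_(a < n) \sum_b (u b * v b)
  - (\sum_a \sum_b u a * v b + \sum_a \sum_b v a * u b)).
  rewrite -!big_split -sumrB; apply: eq_bigr => a _.
  rewrite -!big_split -sumrB; apply: eq_bigr => b _ /=; ring.
by rewrite sum_pairs_fst sum_pairs_snd !sum_pairs_prod; ring.
Qed.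

Lemma sum_pairs_add_mul :
  \sum_a \sum_b (u a + u b) * (v a + v b) =
  2 * (n%:R * \sum_a u a * v a + (\sum_a u a) * (\sum_a v a)).
Proof.
transitivity (\sum_a \sum_(b < n) (u a * v a) + \sum_(a < n) \sum_b (u b * v b)
  + (\sum_a \sum_b u a * v b + \sum_a \sum_b v a * u b)).
  rewrite -!big_split; apply: eq_bigr => a _.
  rewrite -!big_split; apply: eq_bigr => b _ /=; ring.
by rewrite sum_pairs_fst sum_pairs_snd !sum_pairs_prod; ring.
Qed.
End PairSums.

Lemma sumr_indicator (R : pzSemiRingType) (I : finType) (j : I) (F : I -> R) :
  \sum_i (j == i)%:R * F i = F j.
Proof.
rewrite (bigD1 j) //= eqxx mul1r big1 ?addr0 // => i.
by rewrite eq_sym => /negbTE ->; rewrite mul0r.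
Qed.

Lemma expR_le_quad {R : realType} {y : R} : y * 2 <= 1 -> expR y <= 1 + y + 2 * y ^+ 2.
Proof.
move=> y_le_half.
have expN_ge := expR_ge1Dx (- y).
have quad_ge0 : 0 <= 1 + y + 2 * y ^+ 2 by nra.
(* (1 + y + 2 y^2) (1 - y) = 1 + y^2 (1 - 2 y) >= 1 *)
have : 1 <= (1 + y + 2 * y ^+ 2) * expR (- y).
  by apply: le_trans (ler_wpM2l quad_ge0 expN_ge); nra.
move/(ler_wpM2l (ltW (expR_gt0 y))).
by rewrite mulr1 mulrCA expRxMexpNx_1 mulr1.
Qed.

Lemma ln_le_subr1 {R : realType} {y : R} : 0 < y -> ln y <= y - 1.
Proof. by move=> y0; have := @le_ln1Dx R (y - 1); rewrite [1 + _]addrC subrK; apply; lra. Qed.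

Section Rex3Round.
Context {R : realType} {K : nat} (x : nat -> 'I_K -> R) (gamma : R).
Hypotheses (K_gt0 : (0 < K)%N) (gamma_gt0 : 0 < gamma) (gamma_le_half : gamma * 2 <= 1).

Local Notation p := (rex3_p gamma).
Local Notation update := (rex3_update x gamma).

Definition eta : R := gamma / K%:R.

Definition positive_weights (w : 'I_K -> R) := forall i, 0 < w i.

Definition normalized_weight (w : 'I_K -> R) i := w i / \sum_j w j.

Local Notation q := normalized_weight.

Definition rex3_gap t w (a b c : 'I_K) : R := (x t a - x t b) / (2 * p w c).

(* Importance-weighted estimate of [x t i] minus the expected reward of the round. *)
Definition rex3_est t w (a b i : 'I_K) : R :=
  (a == i)%:R * rex3_gap t w a b a - (b == i)%:R * rex3_gap t w a b b.

Definition Epair w (F : 'I_K -> 'I_K -> R) := \sum_a \sum_b p w a * p w b * F a b.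

Definition round_gain t w := \sum_i p w i * x t i.

Definition potential (w : 'I_K -> R) j := ln (\sum_i w i) - ln (w j).

Lemma eta_gt0 : 0 < eta.
Proof. by rewrite divr_gt0 // ltr0n. Qed.

Lemma one_sub_gamma_gt0 : 0 < 1 - gamma.
Proof. by have := gamma_le_half; have := gamma_gt0; lra. Qed.

Lemma rex3_updateE t w a b i :
  update t w a b i = w i * expR (eta * rex3_est t w a b i).
Proof.
rewrite /rex3_update /rex3_est /rex3_gap /psi /eta.
have [<-|nab] := eqVneq a b; first by rewrite subrr mulr0 expR0 mulr1.
have [<-|nia] := eqVneq a i; first by rewrite eq_sym (negbTE nab) mul1r mul0r subr0.
rewrite mul0r sub0r.
have [<-|nib] := eqVneq b i; first by rewrite mul1r mulrN.
by rewrite mul0r oppr0 mulr0 expR0 mulr1.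
Qed.

Lemma sum_weights_gt0 w : positive_weights w -> 0 < \sum_i w i.
Proof.
move=> w_gt0; rewrite (bigD1 (Ordinal K_gt0)) //= ltr_wpDr ?w_gt0 //.
by apply: sumr_ge0 => i _; apply/ltW.
Qed.

Lemma rex3_update_gt0 t w a b : positive_weights w -> positive_weights (update t w a b).
Proof. by move=> w_gt0 i; rewrite rex3_updateE mulr_gt0 ?expR_gt0. Qed.

Section Weights.
Variable w : 'I_K -> R.
Hypothesis w_gt0 : positive_weights w.

Lemma normalized_weight_ge0 i : 0 <= q w i.
Proof. by rewrite divr_ge0 // ltW ?w_gt0 ?sum_weights_gt0 //. Qed.

Lemma sum_normalized_weight : \sum_i q w i = 1.
Proof. by rewrite -mulr_suml divff // gt_eqF ?sum_weights_gt0 //. Qed.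

Lemma rex3_pE i : p w i = (1 - gamma) * q w i + eta.
Proof. by []. Qed.

Lemma eta_le_rex3_p i : eta <= p w i.
Proof. by rewrite rex3_pE lerDr mulr_ge0 ?normalized_weight_ge0 // ltW ?one_sub_gamma_gt0. Qed.

Lemma rex3_p_gt0 i : 0 < p w i.
Proof. exact: lt_le_trans eta_gt0 (eta_le_rex3_p i). Qed.

Lemma normalized_weight_le i : (1 - gamma) * q w i <= p w i.
Proof. by rewrite rex3_pE lerDl ltW ?eta_gt0. Qed.

Lemma sum_rex3_p : \sum_i p w i = 1.
Proof.
rewrite big_split /= -mulr_sumr sum_normalized_weight sumr_const card_ord.
by rewrite mulr1 -[_ *+ K]mulr_natr divfK ?subrK // gt_eqF // ltr0n.
Qed.

Lemma Epair_const c : Epair w (fun _ _ => c) = c.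
Proof.
have {2}<- : (\sum_a p w a) * (\sum_b p w b) * c = c by rewrite sum_rex3_p !mul1r.
by rewrite -sum_pairs_prod mulr_suml; apply: eq_bigr => a _; rewrite mulr_suml.
Qed.

Lemma EpairD F G : Epair w (fun a b => F a b + G a b) = Epair w F + Epair w G.
Proof.
rewrite -big_split; apply: eq_bigr => a _.
by rewrite -big_split; apply: eq_bigr => b _; rewrite mulrDr.
Qed.

Lemma EpairZ c F : Epair w (fun a b => c * F a b) = c * Epair w F.
Proof.
rewrite mulr_sumr; apply: eq_bigr => a _.
by rewrite mulr_sumr; apply: eq_bigr => b _; rewrite mulrCA.
Qed.

Lemma EpairB F G : Epair w (fun a b => F a b - G a b) = Epair w F - Epair w G.
Proof.
rewrite -sumrB; apply: eq_bigr => a _.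
by rewrite -sumrB; apply: eq_bigr => b _; rewrite mulrBr.
Qed.

Lemma ler_Epair F G : (forall a b, F a b <= G a b) -> Epair w F <= Epair w G.
Proof.
move=> FG; apply: ler_sum => a _; apply: ler_sum => b _.
by rewrite ler_wpM2l // mulr_ge0 // ltW ?rex3_p_gt0.
Qed.

Lemma Epair_mid_reward t : Epair w (fun a b => (x t a + x t b) / 2) = round_gain t w.
Proof.
transitivity (((\sum_a p w a * x t a) * (\sum_b p w b)
               + (\sum_a p w a) * (\sum_b p w b * x t b)) / 2).
  rewrite -!sum_pairs_prod -big_split mulr_suml; apply: eq_bigr => a _.
  by rewrite -big_split mulr_suml; apply: eq_bigr => b _ /=; ring.
by rewrite sum_rex3_p /round_gain; field.
Qed.

Lemma sum_rex3_p_mul_subr t c : \sum_i p w i * (c - x t i) = c - round_gain t w.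
Proof. by under eq_bigr do rewrite mulrBr; rewrite sumrB -mulr_suml sum_rex3_p mul1r. Qed.

Lemma Epair_est t j : Epair w (fun a b => rex3_est t w a b j) = x t j - round_gain t w.
Proof.
transitivity (\sum_a (j == a)%:R * \sum_b p w b * (x t j - x t b) / 2
              + \sum_a \sum_b (j == b)%:R * (p w a * (x t j - x t a) / 2)).
  rewrite -big_split; apply: eq_bigr => a _.
  rewrite mulr_sumr -big_split; apply: eq_bigr => b _.
  rewrite /= /rex3_est /rex3_gap [a == j]eq_sym [b == j]eq_sym.
  have [<- | _] := eqVneq j a; have [<- | _] := eqVneq j b;
    by rewrite /=; field; rewrite !lt0r_neq0 ?rex3_p_gt0.
rewrite exchange_big [X in _ + X](eq_bigr (fun b => (j == b)%:R *
  \sum_a p w a * (x t j - x t a) / 2)) => [|b _]; last by rewrite mulr_sumr.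
by rewrite !sumr_indicator -!mulr_suml !sum_rex3_p_mul_subr; field.
Qed.

Lemma eta_mul_est_le_half t a b i : (forall k, 0 <= x t k <= 1) ->
  eta * rex3_est t w a b i * 2 <= 1.
Proof.
move=> hx.
have gap_le c : `|eta * rex3_gap t w a b c * 2| <= 1.
  have pc := rex3_p_gt0 c; have := eta_le_rex3_p c; have := eta_gt0.
  move: (hx a) (hx b) => /andP[? ?] /andP[? ?] ? ?.
  have -> : eta * rex3_gap t w a b c * 2 = eta * (x t a - x t b) / p w c.
    by rewrite /rex3_gap; field; rewrite lt0r_neq0.
  by rewrite ler_norml ler_pdivrMr ?ler_pdivlMr //; apply/andP; split; nra.
rewrite /rex3_est; have [<-|_] := eqVneq a i.
  have [<-|_] := eqVneq b a; first by rewrite subrr mulr0 mul0r ler01.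
  by rewrite mul1r mul0r subr0; apply: le_trans (ler_norm _) (gap_le a).
have [_|_] := eqVneq b i; last by rewrite !mul0r subrr mulr0 mul0r ler01.
rewrite mul0r sub0r mul1r mulrN mulNr; apply: le_trans (ler_norm _) _.
by rewrite normrN gap_le.
Qed.

Lemma log_ratio_le t a b : (forall k, 0 <= x t k <= 1) ->
  ln ((\sum_i update t w a b i) / \sum_i w i) <=
  eta * \sum_i q w i * rex3_est t w a b i
  + 2 * eta ^+ 2 * \sum_i q w i * rex3_est t w a b i ^+ 2.
Proof.
move=> hx.
have ratioE : (\sum_i update t w a b i) / \sum_i w i =
              \sum_i q w i * expR (eta * rex3_est t w a b i).
  by rewrite mulr_suml; apply: eq_bigr => i _; rewrite rex3_updateE mulrAC.
have ratio_gt0 : 0 < (\sum_i update t w a b i) / \sum_i w i.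
  by rewrite divr_gt0 // sum_weights_gt0 //; exact: rex3_update_gt0.
apply: le_trans (ln_le_subr1 ratio_gt0) _; rewrite ratioE.
have -> : eta * \sum_i q w i * rex3_est t w a b i
          + 2 * eta ^+ 2 * \sum_i q w i * rex3_est t w a b i ^+ 2 =
    \sum_i q w i * (1 + eta * rex3_est t w a b i + 2 * (eta * rex3_est t w a b i) ^+ 2) - 1.
  rewrite -[X in _ = _ - X]sum_normalized_weight !mulr_sumr -sumrB -big_split.
  by apply: eq_bigr => i _ /=; ring.
rewrite lerD2r; apply: ler_sum => i _; rewrite ler_wpM2l ?normalized_weight_ge0 //.
exact/expR_le_quad/eta_mul_est_le_half.
Qed.

Lemma sum_weighted_est t a b :
  \sum_i q w i * rex3_est t w a b i =
  q w a * rex3_gap t w a b a - q w b * rex3_gap t w a b b.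
Proof.
under eq_bigr => i _ do rewrite mulrBr !(mulrCA (q w i) (_ == i)%:R).
by rewrite sumrB !sumr_indicator.
Qed.

Lemma sum_weighted_est_sq_le t a b :
  \sum_i q w i * rex3_est t w a b i ^+ 2 <=
  2 * (q w a * rex3_gap t w a b a ^+ 2 + q w b * rex3_gap t w a b b ^+ 2).
Proof.
set ga := rex3_gap t w a b a; set gb := rex3_gap t w a b b.
apply: (@le_trans _ _ (\sum_i 2 * (q w i * ((a == i)%:R * ga ^+ 2 + (b == i)%:R * gb ^+ 2)))).
  apply: ler_sum => i _; rewrite (mulrCA 2) ler_wpM2l ?normalized_weight_ge0 // /rex3_est -/ga -/gb.
  have := sqr_ge0 (ga + gb).
  by case: (a == i); case: (b == i); rewrite /= ?mul1r ?mul0r ?subr0 ?sub0r ?addr0 ?add0r; nra.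
rewrite -mulr_sumr ler_pM2l //.
under eq_bigr => i _ do rewrite mulrDr !(mulrCA (q w i) (_ == i)%:R).
by rewrite big_split /= !sumr_indicator.
Qed.

Lemma normalized_weightE i : q w i = (p w i - eta) / (1 - gamma).
Proof. by rewrite rex3_pE; field; rewrite lt0r_neq0 ?one_sub_gamma_gt0. Qed.

Lemma normalized_weight_div_le i : q w i / p w i <= (1 - gamma)^-1.
Proof.
rewrite ler_pdivrMr ?rex3_p_gt0 // ler_pdivlMl ?one_sub_gamma_gt0 //.
exact: normalized_weight_le.
Qed.

Lemma rex3_p_mul_first_order t a b :
  p w a * p w b * (eta * (q w a * rex3_gap t w a b a - q w b * rex3_gap t w a b b)) =
  eta ^+ 2 / (1 - gamma) * ((p w a - p w b) * (x t a - x t b) / 2).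
Proof.
rewrite !normalized_weightE /rex3_gap; field.
by rewrite !lt0r_neq0 ?rex3_p_gt0 ?one_sub_gamma_gt0.
Qed.

Lemma rex3_p_mul_second_order_le t a b : (forall k, 0 <= x t k <= 1) ->
  p w a * p w b * (2 * eta ^+ 2 * (2 * (q w a * rex3_gap t w a b a ^+ 2
                                       + q w b * rex3_gap t w a b b ^+ 2))) <=
  eta ^+ 2 / (1 - gamma) * ((p w a + p w b) * (x t a + x t b)).
Proof.
move=> hx.
have pa_gt0 := rex3_p_gt0 a; have pb_gt0 := rex3_p_gt0 b.
have -> : p w a * p w b * (2 * eta ^+ 2 * (2 * (q w a * rex3_gap t w a b a ^+ 2
                                             + q w b * rex3_gap t w a b b ^+ 2))) =
    eta ^+ 2 * ((x t a - x t b) ^+ 2 * (p w b * (q w a / p w a) + p w a * (q w b / p w b))).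
  by rewrite /rex3_gap; field; rewrite !lt0r_neq0.
rewrite [X in _ <= X](_ : _ =
    eta ^+ 2 * ((x t a + x t b) * ((p w a + p w b) / (1 - gamma)))); last first.
  by field; rewrite lt0r_neq0 ?one_sub_gamma_gt0.
have sq_gap_le : (x t a - x t b) ^+ 2 <= x t a + x t b.
  by move: (hx a) (hx b) => /andP[? ?] /andP[? ?]; nra.
have weights_le : p w b * (q w a / p w a) + p w a * (q w b / p w b) <=
                  (p w a + p w b) / (1 - gamma).
  have := ler_wpM2l (ltW pb_gt0) (normalized_weight_div_le a).
  have := ler_wpM2l (ltW pa_gt0) (normalized_weight_div_le b).
  lra.
have qp_ge0 i : 0 <= q w i / p w i.
  by apply: divr_ge0; [exact: normalized_weight_ge0 | exact: ltW (rex3_p_gt0 i)].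
rewrite ler_wpM2l ?sqr_ge0 //.
by apply: ler_pM sq_gap_le weights_le; rewrite ?sqr_ge0 // addr_ge0 // mulr_ge0 // ltW.
Qed.

Lemma weighted_log_ratio_le t a b : (forall k, 0 <= x t k <= 1) ->
  p w a * p w b * ln ((\sum_i update t w a b i) / \sum_i w i) <=
  eta ^+ 2 / (1 - gamma) *
    ((p w a - p w b) * (x t a - x t b) / 2 + (p w a + p w b) * (x t a + x t b)).
Proof.
move=> hx.
have pab_ge0 : 0 <= p w a * p w b by rewrite mulr_ge0 // ltW ?rex3_p_gt0.
apply: le_trans (ler_wpM2l pab_ge0 (log_ratio_le t a b hx)) _.
rewrite mulrDr sum_weighted_est rex3_p_mul_first_order.
have := rex3_p_mul_second_order_le t a b hx.
have := ler_wpM2l pab_ge0 (ler_wpM2l (mulr_ge0 (ler0n _ 2) (sqr_ge0 eta))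
          (sum_weighted_est_sq_le t a b)).
lra.
Qed.

Lemma Epair_log_ratio_le t : (forall k, 0 <= x t k <= 1) ->
  Epair w (fun a b => ln ((\sum_i update t w a b i) / \sum_i w i)) <=
  eta ^+ 2 / (1 - gamma) * (3 * K%:R * round_gain t w + \sum_i x t i).
Proof.
move=> hx.
set c := eta ^+ 2 / (1 - gamma).
apply: (@le_trans _ _ (\sum_a \sum_b c * ((p w a - p w b) * (x t a - x t b) / 2
                                        + (p w a + p w b) * (x t a + x t b)))).
  by apply: ler_sum => a _; apply: ler_sum => b _; exact: weighted_log_ratio_le.
rewrite le_eqVlt; apply/orP; left; apply/eqP.
transitivity (c * ((\sum_a \sum_b (p w a - p w b) * (x t a - x t b)) / 2
                  + \sum_a \sum_b (p w a + p w b) * (x t a + x t b))).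
  rewrite mulr_suml -big_split mulr_sumr; apply: eq_bigr => a _.
  by rewrite mulr_suml -big_split mulr_sumr.
rewrite sum_pairs_sub_mul sum_pairs_add_mul sum_rex3_p /round_gain; by field.
Qed.

Lemma potential_ge0 j : 0 <= potential w j.
Proof.
rewrite /potential subr_ge0 ler_ln ?posrE ?w_gt0 ?sum_weights_gt0 //.
by rewrite (bigD1 j) //= lerDl; apply: sumr_ge0 => i _; exact/ltW.
Qed.

Lemma potential_update t a b j :
  potential (update t w a b) j =
  potential w j + ln ((\sum_i update t w a b i) / \sum_i w i) - eta * rex3_est t w a b j.
Proof.
have W_gt0 := sum_weights_gt0 _ w_gt0.
have W'_gt0 := sum_weights_gt0 _ (rex3_update_gt0 t w a b w_gt0).
rewrite /potential [update t w a b j]rex3_updateE lnM ?posrE ?w_gt0 ?expR_gt0 // expRK.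
by rewrite ln_div ?posrE //; ring.
Qed.

Lemma Epair_potential_update_le t j : (forall k, 0 <= x t k <= 1) ->
  Epair w (fun a b => potential (update t w a b) j) <=
  potential w j - eta * (x t j - round_gain t w)
  + eta ^+ 2 / (1 - gamma) * (3 * K%:R * round_gain t w + \sum_i x t i).
Proof.
move=> hx.
have -> : Epair w (fun a b => potential (update t w a b) j) =
    Epair w (fun a b => ln ((\sum_i update t w a b i) / \sum_i w i)
                        + (- eta) * rex3_est t w a b j + potential w j).
  apply: eq_bigr => a _; apply: eq_bigr => b _.
  by rewrite potential_update; ring.
rewrite EpairD Epair_const EpairD EpairZ Epair_est.
by have := Epair_log_ratio_le t hx; lra.
Qed.

End Weights.

Lemma potential_ge_gain T j n t w : positive_weights w -> (t + n <= T)%N ->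
  (forall s k, (s < T)%N -> 0 <= x s k <= 1) ->
  \sum_(s < n) (eta * x (t + s)%N j - eta ^+ 2 / (1 - gamma) * \sum_i x (t + s)%N i)
  - (eta + 3 * K%:R * (eta ^+ 2 / (1 - gamma))) * rex3_egain x gamma n t w
  <= potential w j.
Proof.
elim: n t w => [|n IH] t w w_gt0 tn hx.
  by rewrite big_ord0 /= mulr0 subr0 potential_ge0.
have hxt k : 0 <= x t k <= 1 by apply: hx; lia.
have egainE : rex3_egain x gamma n.+1 t w = round_gain t w
    + Epair w (fun a b => rex3_egain x gamma n t.+1 (update t w a b)).
  by rewrite -(Epair_mid_reward _ w_gt0) -EpairD.
rewrite big_ord_recl addn0 egainE /=.
rewrite (eq_bigr (fun s : 'I_n => eta * x (t.+1 + s)%N j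
  - eta ^+ 2 / (1 - gamma) * \sum_i x (t.+1 + s)%N i)) => [|s _]; last by rewrite addSnnS.
have tn' : (t.+1 + n <= T)%N by rewrite addSnnS.
set kappa := eta + 3 * K%:R * (eta ^+ 2 / (1 - gamma)).
set S := \sum_(s < n) _.
have IH_pairs a b :
  S - kappa * rex3_egain x gamma n t.+1 (update t w a b) <= potential (update t w a b) j.
  exact: IH (rex3_update_gt0 t w a b w_gt0) tn' hx.
have := @ler_Epair w w_gt0 _ _ IH_pairs.
rewrite EpairB Epair_const // EpairZ.
have := Epair_potential_update_le _ w_gt0 t j hxt.
rewrite /kappa; lra.
Qed.

Lemma rex3_regret_bound T j M : (forall s k, (s < T)%N -> 0 <= x s k <= 1) ->
  0 <= M -> rex3_egain x gamma T 0 (fun _ => 1) <= M ->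
  \sum_(s < T) \sum_i x s i <= K%:R * M ->
  \sum_(s < T) x s j - rex3_egain x gamma T 0 (fun _ => 1)
    <= K%:R * ln K%:R / gamma + 8 * gamma * M.
Proof.
move=> hx M_ge0 gain_le total_le.
have := potential_ge_gain T j T 0 (fun _ => 1) (fun _ => ltr01) (leqnn T) hx.
have -> : potential (fun _ => 1) j = ln K%:R.
  by rewrite /potential sumr_const card_ord ln1 subr0.
under eq_bigr do rewrite add0n.
rewrite big_split /= -mulr_sumr sumrN -mulr_sumr.
set A := rex3_egain _ _ _ _ _ in gain_le *; set G := \sum_(s < T) x s j.
set c := eta ^+ 2 / (1 - gamma) => potential_le.
have c_ge0 : 0 <= c by rewrite divr_ge0 ?sqr_ge0 // ltW ?one_sub_gamma_gt0.
have K_gt0R : 0 < K%:R :> R by rewrite ltr0n.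
have main : eta * (G - A) <= ln K%:R + 4 * K%:R * c * M.
  have := ler_wpM2l c_ge0 total_le.
  have := ler_wpM2l (mulr_ge0 (mulr_ge0 (ler0n _ 3) (ltW K_gt0R)) c_ge0) gain_le.
  lra.
have -> : G - A = K%:R / gamma * (eta * (G - A)).
  by rewrite /eta; field; rewrite !lt0r_neq0.
apply: le_trans (ler_wpM2l (divr_ge0 (ltW K_gt0R) (ltW gamma_gt0)) main) _.
have -> : K%:R / gamma * (ln K%:R + 4 * K%:R * c * M) =
          K%:R * ln K%:R / gamma + 4 * (gamma / (1 - gamma)) * M.
  by rewrite /c /eta; field; rewrite !lt0r_neq0 ?one_sub_gamma_gt0.
rewrite lerD2l.
have : gamma / (1 - gamma) <= 2 * gamma.
  rewrite ler_pdivrMr ?one_sub_gamma_gt0 //.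
  by have := gamma_gt0; have := gamma_le_half; nra.
by move/(ler_wpM2r M_ge0); lra.
Qed.

End Rex3Round.

Lemma sqrtr_ge (R : rcfType) (a b : R) : 0 <= a -> a ^+ 2 <= b -> a <= Num.sqrt b.
Proof.
move=> a_ge0 ab; rewrite -(ger0_norm a_ge0) -sqrtr_sqr ler_sqrt //.
exact: le_trans (sqr_ge0 a) ab.
Qed.

Lemma expR1_bounds (R : realType) : 9 / 4 <= expR 1 :> R /\ expR 1 <= 4 :> R.
Proof.
have e_sq : expR 1 = expR (2^-1) * expR (2^-1) :> R by rewrite -expRD; congr expR; field.
have := @expR_ge1Dx R (2^-1); have := @expR_ge1Dx R (- 2^-1).
have := @expRxMexpNx_1 R (2^-1); have := @expR_gt0 R (2^-1).
by rewrite e_sq; split; nra.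
Qed.

Section CumulativeGains.
Context {R : realType} {K : nat} (x : nat -> 'I_K -> R) (T : nat).
Hypothesis x_in01 : forall s i, (s < T)%N -> 0 <= x s i <= 1.

Lemma cumgain_ge0 i : 0 <= cumgain x T i.
Proof. by apply: sumr_ge0 => s _; case/andP: (x_in01 _ i (ltn_ord s)). Qed.

Lemma cumgain_le_horizon i : cumgain x T i <= T%:R.
Proof.
apply: (@le_trans _ _ (\sum_(s < T) (1 : R))); last by rewrite sumr_const card_ord.
by apply: ler_sum => s _; case/andP: (x_in01 _ i (ltn_ord s)).
Qed.

Lemma cumgain_le_Gmax i : cumgain x T i <= Gmax x T.
Proof.
rewrite /Gmax; case: pickP => [i0 _|no_arm]; last by have := no_arm i.
by rewrite (bigD1 i) //= le_max lexx.
Qed.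

Lemma Gmax_attained : (0 < K)%N -> exists j, Gmax x T = cumgain x T j.
Proof.
move=> K_gt0; rewrite /Gmax; case: pickP => [i0 _|no_arm]; last by have := no_arm (Ordinal K_gt0).
apply: (big_ind (fun y => exists j, y = cumgain x T j)); first by exists i0.
  move=> _ _ [j1 ->] [j2 ->].
  by case: (leP (cumgain x T j1) (cumgain x T j2)) => _; [exists j2 | exists j1].
by move=> j _; exists j.
Qed.

Lemma Gmin_le_cumgain i : Gmin x T <= cumgain x T i.
Proof.
rewrite /Gmin; case: pickP => [i0 _|no_arm]; last by have := no_arm i.
by rewrite (bigD1 i) //= ge_min lexx.
Qed.

Lemma Gmin_ge0 : 0 <= Gmin x T.
Proof.
rewrite /Gmin; case: pickP => [i0 _|//].
apply: (big_ind (fun y => 0 <= y)); first exact: cumgain_ge0.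
  by move=> y z y0 z0; rewrite le_min y0 z0.
by move=> j _; exact: cumgain_ge0.
Qed.

Lemma sum_rewards_le_Gmax : \sum_(s < T) \sum_i x s i <= K%:R * Gmax x T.
Proof.
rewrite exchange_big /= mulr_natl -[X in _ *+ X]card_ord -sumr_const.
by apply: ler_sum => i _; exact: cumgain_le_Gmax.
Qed.

Lemma rex3_tau_bounds : (0 < K)%N ->
  Gmax x T <= 2 * rex3_tau x T /\ rex3_tau x T <= 4 * T%:R.
Proof.
move=> K_gt0; have [j Gmax_j] := Gmax_attained K_gt0.
have := Gmin_ge0; have := cumgain_le_horizon j.
have := le_trans (Gmin_le_cumgain j) (cumgain_le_Gmax j).
have [e_lo e_hi] := expR1_bounds R.
by rewrite /rex3_tau -Gmax_j => ? ? ?; split; nra.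
Qed.

End CumulativeGains.

Definition tuned_rate {R : realType} (c tau : R) : R :=
  if tau == 0 then 2^-1 else Num.min 2^-1 (Num.sqrt (c / tau)).

Lemma tuned_rate_bound {R : realType} {c tau G T : R} :
  0 < c -> c <= T -> 0 <= G -> G <= 2 * tau -> tau <= 4 * T ->
  [/\ 0 < tuned_rate c tau, tuned_rate c tau * 2 <= 1
    & c / tuned_rate c tau + 8 * tuned_rate c tau * G <= 40 * Num.sqrt (c * T)].
Proof.
move=> c_gt0 cT G_ge0 G_tau tau_T.
have c_le_sqrt : c <= Num.sqrt (c * T) by apply: sqrtr_ge; [exact: ltW | nra].
have half_gt0 : (0 : R) < 2^-1 by rewrite invr_gt0.
have half2 : (2^-1 : R) * 2 = 1 by rewrite mulVf.
rewrite /tuned_rate; have [tau0|tau_neq0] := eqVneq tau 0.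
  split; rewrite ?half2 // invrK; move: G_tau; rewrite tau0; nra.
have tau_gt0 : 0 < tau by rewrite lt_neqAle eq_sym tau_neq0; nra.
set s := Num.sqrt (c / tau).
have s_gt0 : 0 < s by rewrite sqrtr_gt0 divr_gt0.
have c_eq : c = s ^+ 2 * tau by rewrite sqr_sqrtr ?divfK ?divr_ge0 ?ltW ?lt0r_neq0.
case: (leP 2^-1 s) => s_half; split; rewrite ?half2 ?invrK //.
- have : tau <= 4 * c.
    by rewrite c_eq; have := ler_pM (ltW half_gt0) (ltW half_gt0) s_half s_half; nra.
  nra.
- lra.
- have s_tau : s * tau / 2 <= Num.sqrt (c * T).
    apply: sqrtr_ge; first by rewrite divr_ge0 // mulr_ge0 // ltW.
    rewrite (_ : (s * tau / 2) ^+ 2 = c * tau / 4); last by rewrite c_eq; field.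
    nra.
  rewrite (_ : c / s = s * tau); last by rewrite c_eq; field; rewrite lt0r_neq0.
  nra.
Qed.

Theorem corollary2 (R : realType) :
  exists C c0 : R, 0 < C /\ 0 <= c0 /\
  forall (K T : nat) (x : nat -> 'I_K -> R),
    (2 <= K)%N -> (1 <= T)%N ->
    (forall (t : nat) (i : 'I_K), (t < T)%N -> 0 <= x t i <= 1) ->
    c0 * (K%:R * ln K%:R) <= T%:R ->
    Gmax x T - rex3_expected_gain x (rex3_gamma x T) T
      <= C * Num.sqrt (K%:R * ln K%:R * T%:R).
Proof.
exists 40, 1; split; first lra; split; first lra.
move=> K T x K_ge2 _ x_in01; rewrite mul1r => KlnK_le_T.
have K_gt0 : (0 < K)%N by apply: leq_trans K_ge2.
have KlnK_gt0 : 0 < K%:R * ln K%:R :> R by rewrite mulr_gt0 ?ln_gt0 ?ltr0n ?ltr1n.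
have [j Gmax_j] := Gmax_attained x T K_gt0.
have Gmax_ge0 : 0 <= Gmax x T by rewrite Gmax_j (cumgain_ge0 x T x_in01).
have [Gmax_tau tau_T] := rex3_tau_bounds x T x_in01 K_gt0.
have [gamma_gt0 gamma_le_half tuned] :=
  tuned_rate_bound KlnK_gt0 KlnK_le_T Gmax_ge0 Gmax_tau tau_T.
rewrite -[rex3_gamma x T]/(tuned_rate _ (rex3_tau x T)) /rex3_expected_gain.
set A := rex3_egain _ _ _ _ _.
have [A_le_G | G_lt_A] := leP A (Gmax x T); last first.
  by apply: le_trans (ltW _) (mulr_ge0 _ (sqrtr_ge0 _)); rewrite ?subr_lt0.
apply: le_trans tuned; rewrite {1}Gmax_j.
exact: rex3_regret_bound x _ K_gt0 gamma_gt0 gamma_le_half T j _ x_in01 Gmax_ge0 A_le_G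
  (sum_rewards_le_Gmax x T).
Qed.
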